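(* Fix $\alpha>0$, $\gamma>0$, $\Sigma_\epsilon>0$, $\omega_1\in[0,1)$, $\omega_2\in[0,1]$. Let $$T(x)=\left(\frac{\omega_2}{x^2}+\frac{(1-\omega_2)\alpha^2\gamma^2\Sigma_\epsilon}{(1+\gamma-x)^2}\right)^{-1/2},\qquad f_y(x)=\left(\frac{\omega_1}{x^2}+\frac{(1-\omega_1)\gamma^2\alpha^2\Sigma_\epsilon}{(1+\gamma-y)^2}\right)^{-1/2}.$$ Let $(\lambda_{2,t})_{t\in\mathbb Z}$ be a bi-infinite orbit of $T$ (i.e. $T(\lambda_{2,t})=\lambda_{2,t+1}$ for all $t\in\mathbb Z$) contained in a compact $T$-invariant interval $J\subset[1,1+\gamma)$. For $\lambda_{1,0},\lambda_{1,0}'\in[1,\infty)$ define $\lambda_{1,t+1}=f_{\lambda_{2,t}}(\lambda_{1,t})$ and $\lambda'_{1,t+1}=f_{\lambda_{2,t}}(\lambda'_{1,t})$ for $t\ge0$. Then $$\lim_{n\to\infty}|\lambda_{1,n}-\lambda'_{1,n}|=0.$$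
   Context: This is the case $\pi_1=0$ of the two-bank leverage model: bank 2 (the large, forcing bank) evolves autonomously by the unimodal map $T$, and bank 1 (the small, forced bank) evolves by the skew product $\lambda_{1,t+1}=f_{\lambda_{2,t}}(\lambda_{1,t})$, $\lambda_{2,t+1}=T(\lambda_{2,t})$. The space of bi-infinite $T$-orbits is the natural (invertible) extension $\hat I$ of $T$. *)

From Stdlib Require Import Reals ZArith.
Open Scope R_scope.

(* x^(-1/2) written as 1 / sqrt x (argument positive in all relevant cases). *)
Definition Tmap (alpha gamma Sigma omega2 : R) (x : R) : R :=
  / sqrt (omega2 / x ^ 2
          + (1 - omega2) * alpha ^ 2 * gamma ^ 2 * Sigma / (1 + gamma - x) ^ 2).

Definition fmap (alpha gamma Sigma omega1 : R) (y x : R) : R :=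
  / sqrt (omega1 / x ^ 2
          + (1 - omega1) * gamma ^ 2 * alpha ^ 2 * Sigma / (1 + gamma - y) ^ 2).

Fixpoint forced (alpha gamma Sigma omega1 : R) (lam2 : Z -> R) (l0 : R) (n : nat) : R :=
  match n with
  | O => l0
  | S k => fmap alpha gamma Sigma omega1 (lam2 (Z.of_nat k))
             (forced alpha gamma Sigma omega1 lam2 l0 k)
  end.

From Stdlib Require Import Reals ZArith Lra Lia.
Open Scope R_scope.

(* In the variable u = 1 / x^2 the forced recursion is affine,
   u_{n+1} = omega1 u_n + c_n, so two forced trajectories satisfy
   u_n - u'_n = omega1^n (u_0 - u'_0).  Since the forcing stays in [1, 1 + gamma),
   c_n >= K := (1 - omega1) alpha^2 Sigma > 0, and u |-> u^{-1/2} is Lipschitz on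
   [K, oo); hence |x_n - x'_n| decays geometrically.  Only the bounds on lam2
   matter. *)

Lemma Rdiv_sqr_nonneg w x : 0 <= w -> 0 <= w / x ^ 2.
Proof.
  intros Hw. unfold Rdiv. rewrite <- pow_inv.
  apply Rmult_le_pos; [exact Hw | apply pow2_ge_0].
Qed.

Lemma Rle_mult_sqr_ratio k g d : 0 <= k -> 0 < d <= g -> k <= k * g ^ 2 / d ^ 2.
Proof.
  intros Hk Hd.
  assert (Hd2 : 0 < d ^ 2) by (apply pow_lt; lra).
  assert (Hgd : d ^ 2 <= g ^ 2) by (simpl; nra).
  apply (Rmult_le_reg_r (d ^ 2)); [exact Hd2|].
  unfold Rdiv. rewrite Rmult_assoc, Rinv_l, Rmult_1_r by lra.
  apply Rmult_le_compat_l; [exact Hk | exact Hgd].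
Qed.

Lemma Rabs_inv_sqrt_sub_le K A B : 0 < K -> K <= A -> K <= B ->
  Rabs (/ sqrt A - / sqrt B) <= Rabs (A - B) / (2 * K * sqrt K).
Proof.
  intros HK HA HB.
  assert (Hs : 0 < sqrt K) by (apply sqrt_lt_R0; exact HK).
  assert (HsA : sqrt K <= sqrt A) by (apply sqrt_le_1_alt; exact HA).
  assert (HsB : sqrt K <= sqrt B) by (apply sqrt_le_1_alt; exact HB).
  assert (eA : sqrt A * sqrt A = A) by (apply sqrt_sqrt; lra).
  assert (eB : sqrt B * sqrt B = B) by (apply sqrt_sqrt; lra).
  assert (eK : sqrt K * sqrt K = K) by (apply sqrt_sqrt; lra).
  set (a := sqrt A) in *; set (b := sqrt B) in *; set (s := sqrt K) in *.
  clearbody a b s. subst A B K.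
  assert (Hab : 0 < a * b) by (apply Rmult_lt_0_compat; lra).
  replace (/ a - / b) with ((b * b - a * a) / (a * b * (a + b))) by (field; lra).
  unfold Rdiv. rewrite Rabs_mult, Rabs_minus_sym, (Rabs_pos_eq (/ (a * b * (a + b)))).
  2: { left. apply Rinv_0_lt_compat, Rmult_lt_0_compat; lra. }
  apply Rmult_le_compat_l; [apply Rabs_pos|].
  apply Rinv_le_contravar.
  - apply Rmult_lt_0_compat; [|exact Hs]. nra.
  - assert (s * s <= a * b) by (apply Rmult_le_compat; lra). nra.
Qed.

Section InverseSquareRecursion.

Variables (w K : R) (c : nat -> R).
Hypotheses (Hw : 0 <= w) (HK : 0 < K) (Hc : forall n, K <= c n).

Definition inv_sqr_step (n : nat) (x : R) : R := / sqrt (w / x ^ 2 + c n).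

Lemma inv_sqr_step_arg_ge n x : K <= w / x ^ 2 + c n.
Proof. pose proof (Rdiv_sqr_nonneg w x Hw). pose proof (Hc n). lra. Qed.

Lemma inv_sqr_inv_sqr_step n x : / inv_sqr_step n x ^ 2 = w / x ^ 2 + c n.
Proof.
  pose proof (inv_sqr_step_arg_ge n x).
  unfold inv_sqr_step. rewrite pow_inv, Rinv_inv. apply pow2_sqrt. lra.
Qed.

Variables (x y : nat -> R).
Hypotheses (Hx : forall n, x (S n) = inv_sqr_step n (x n))
           (Hy : forall n, y (S n) = inv_sqr_step n (y n)).

Lemma inv_sqr_orbit_sub n :
  / x n ^ 2 - / y n ^ 2 = w ^ n * (/ x O ^ 2 - / y O ^ 2).
Proof.
  induction n as [|n IH]; [simpl; ring|].
  rewrite Hx, Hy, !inv_sqr_inv_sqr_step. change (w ^ S n) with (w * w ^ n).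
  rewrite Rmult_assoc, <- IH. unfold Rdiv. ring.
Qed.

Lemma Rabs_orbit_sub_le n :
  Rabs (x (S n) - y (S n))
    <= Rabs (/ x O ^ 2 - / y O ^ 2) / (2 * K * sqrt K) * w ^ S n.
Proof.
  rewrite Hx, Hy. unfold inv_sqr_step at 1 2.
  eapply Rle_trans.
  { apply Rabs_inv_sqrt_sub_le; [exact HK | apply inv_sqr_step_arg_ge ..]. }
  replace (w / x n ^ 2 + c n - (w / y n ^ 2 + c n))
    with (w * (/ x n ^ 2 - / y n ^ 2)) by (unfold Rdiv; ring).
  rewrite inv_sqr_orbit_sub, Rabs_mult, Rabs_mult, (Rabs_pos_eq w), Rabs_pos_eq
    by (try apply pow_le; lra).
  simpl pow. unfold Rdiv. right. ring.
Qed.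

End InverseSquareRecursion.

Lemma Un_cv_0_geometric_bound (u : nat -> R) (C w : R) : 0 <= w < 1 ->
  (forall n, Rabs (u (S n)) <= C * w ^ S n) -> Un_cv u 0.
Proof.
  intros Hw Hu eps Heps.
  assert (HC : 0 < Rabs C + 1) by (pose proof (Rabs_pos C); lra).
  destruct (pow_lt_1_zero w ltac:(rewrite Rabs_pos_eq; lra) (eps / (Rabs C + 1)))
    as [N HN].
  { apply Rdiv_lt_0_compat; assumption. }
  exists (S N). intros [|n] Hn; [lia|].
  unfold R_dist. rewrite Rminus_0_r.
  specialize (HN (S n) ltac:(lia)).
  apply (Rmult_lt_compat_l (Rabs C + 1)) in HN; [|exact HC].
  replace ((Rabs C + 1) * (eps / (Rabs C + 1))) with eps in HN by (field; lra).
  assert (C * w ^ S n <= Rabs C * Rabs (w ^ S n)).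
  { rewrite <- Rabs_mult. apply Rle_abs. }
  pose proof (Rabs_pos (w ^ S n)). pose proof (Hu n). nra.
Qed.

Theorem mainTheorem2 (alpha gamma Sigma omega1 omega2 : R)
  (Halpha : 0 < alpha) (Hgamma : 0 < gamma) (HSigma : 0 < Sigma)
  (Hw1 : 0 <= omega1 < 1) (Hw2 : 0 <= omega2 <= 1)
  (a b : R) (HJ : 1 <= a <= b) (HJb : b < 1 + gamma)
  (HJinv : forall x, a <= x <= b ->
     a <= Tmap alpha gamma Sigma omega2 x <= b)
  (lam2 : Z -> R)
  (Horbit : forall t : Z, Tmap alpha gamma Sigma omega2 (lam2 t) = lam2 (t + 1)%Z)
  (HinJ : forall t : Z, a <= lam2 t <= b)
  (l0 l0' : R) (Hl0 : 1 <= l0) (Hl0' : 1 <= l0') :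
  Un_cv (fun n => Rabs (forced alpha gamma Sigma omega1 lam2 l0 n
                        - forced alpha gamma Sigma omega1 lam2 l0' n)) 0.
Proof.
  set (K := (1 - omega1) * alpha ^ 2 * Sigma).
  set (c := fun n : nat => (1 - omega1) * gamma ^ 2 * alpha ^ 2 * Sigma
                           / (1 + gamma - lam2 (Z.of_nat n)) ^ 2).
  assert (HK : 0 < K).
  { apply Rmult_lt_0_compat; [apply Rmult_lt_0_compat, pow_lt|]; lra. }
  assert (Hc : forall n, K <= c n).
  { intro n. destruct (HinJ (Z.of_nat n)).
    unfold c. replace ((1 - omega1) * gamma ^ 2 * alpha ^ 2 * Sigma) with (K * gamma ^ 2)
      by (unfold K; ring).
    apply Rle_mult_sqr_ratio; lra. }
  set (x := forced alpha gamma Sigma omega1 lam2 l0).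
  set (x' := forced alpha gamma Sigma omega1 lam2 l0').
  apply (Un_cv_0_geometric_bound _
           (Rabs (/ x O ^ 2 - / x' O ^ 2) / (2 * K * sqrt K)) omega1 Hw1).
  intro n. rewrite Rabs_Rabsolu.
  apply (Rabs_orbit_sub_le omega1 K c (proj1 Hw1) HK Hc); reflexivity.
Qed.
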